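(* Let $n,k$ be integers with $2\le k<n$. Then $$\overline{\mathrm{dist}}_F(\mathcal{S}^{n,k},\mathcal{S}^n_+)\ge \frac{n-k}{\sqrt{(k-1)^2 n+n(n-1)}}.$$
   Context: $\mathcal{S}^n_+$ denotes the cone of $n\times n$ real symmetric positive semidefinite (PSD) matrices. For integers $2\le k\le n$, the $k$-PSD closure $\mathcal{S}^{n,k}$ is the set of all $n\times n$ real symmetric matrices all of whose $k\times k$ principal submatrices are PSD. For a matrix $M$, $\mathrm{dist}_F(M,\mathcal{S}^n_+)=\inf_{N\in\mathcal{S}^n_+}\|M-N\|_F$, where $\|\cdot\|_F$ is the Frobenius norm. For a set $\mathcal{K}$ of $n\times n$ matrices, $\overline{\mathrm{dist}}_F(\mathcal{K},\mathcal{S}^n_+)=\sup_{M\in\mathcal{K},\ \|M\|_F=1}\mathrm{dist}_F(M,\mathcal{S}^n_+)$. *)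

From HB Require Import structures.
From mathcomp Require Import all_boot all_order all_algebra.
From mathcomp Require Import all_classical all_reals.
Set Implicit Arguments. Unset Strict Implicit. Unset Printing Implicit Defensive.
Import Order.TTheory GRing.Theory Num.Theory.
Local Open Scope ring_scope.
Local Open Scope classical_set_scope.

Section Defs.
Variable R : realType.

Definition symmetric_mx (n : nat) (M : 'M[R]_n) : Prop := M^T = M.

Definition psd (n : nat) (M : 'M[R]_n) : Prop :=
  symmetric_mx M /\ forall x : 'cV[R]_n, 0 <= (x^T *m M *m x) 0 0.

Definition psd_cone (n : nat) : set 'M[R]_n := [set M | psd M].

(* principal submatrix indexed by the subset S (rows/cols in increasing order) *)
Definition principal_submx (n : nat) (S : {set 'I_n}) (M : 'M[R]_n)
  : 'M[R]_#|S| := \matrix_(i, j) M (enum_val i) (enum_val j).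

Definition kpsd_closure (n k : nat) : set 'M[R]_n :=
  [set M | symmetric_mx M /\
     forall S : {set 'I_n}, #|S| = k -> psd (principal_submx S M)].

Definition frob (n : nat) (M : 'M[R]_n) : R :=
  Num.sqrt (\sum_i \sum_j M i j ^+ 2).

Definition dist_psd (n : nat) (M : 'M[R]_n) : R :=
  inf [set frob (M - N) | N in @psd_cone n].

Definition dist_bar (n : nat) (K : set 'M[R]_n) : R :=
  sup [set dist_psd M | M in K `&` [set M | frob M = 1]].

End Defs.

From mathcomp Require Import all_boot all_order all_algebra.
From mathcomp Require Import all_classical all_reals.
From mathcomp Require Import ring lra.
Set Implicit Arguments. Unset Strict Implicit. Unset Printing Implicit Defensive.
Import Order.TTheory GRing.Theory Num.Theory.
Local Open Scope ring_scope.

(* The witness is A = b (k I - J) with J the all-ones matrix and b chosen so that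
   ||A||_F = 1.  Every k x k principal submatrix of A is b (k I_k - J_k), which is
   PSD by Cauchy-Schwarz.  On the other hand 1^T N 1 >= 0 for every PSD N, while
   1^T A 1 = - b n (n - k); since |1^T D 1| <= n ||D||_F (Cauchy-Schwarz again),
   A is at Frobenius distance at least b (n - k) from every PSD matrix. *)

Section CauchySchwarz.
Variable R : realDomainType.

Lemma sumr_mulrn_eq (T : finType) (i : T) (F : T -> R) :
  \sum_j F j *+ (i == j) = F i.
Proof.
rewrite (bigD1 i) //= eqxx mulr1n big1 ?addr0 // => j.
by rewrite eq_sym => /negPf ->.
Qed.

Lemma sqr_sum_le_card_sum_sqr (T : finType) (f : T -> R) :
  (\sum_i f i) ^+ 2 <= #|T|%:R * \sum_i f i ^+ 2.
Proof.
have sum_sqr_diff_ge0 : 0 <= \sum_i \sum_j (f i - f j) ^+ 2.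
  by do 2![apply: sumr_ge0 => ? _]; apply: sqr_ge0.
suff expand : \sum_i \sum_j (f i - f j) ^+ 2 =
    2%:R * (#|T|%:R * \sum_i f i ^+ 2) - 2%:R * (\sum_i f i) ^+ 2.
  by move: sum_sqr_diff_ge0; rewrite expand subr_ge0 ler_pM2l ?ltr0n.
under eq_bigr do under eq_bigr do rewrite sqrrB.
under eq_bigr do rewrite !big_split /= sumrN.
rewrite !big_split /= !sumrN sumr_const exchange_big /= sumr_const.
have cross : \sum_i \sum_j f i * f j *+ 2 = (\sum_i f i) ^+ 2 *+ 2.
  by rewrite expr2 big_distrlr /= -sumrMnl; apply: eq_bigr => i _; rewrite sumrMnl.
rewrite cross -[#|xpredT|]/#|T| -[_ *+ #|T|]mulr_natr -[_ *+ 2]mulr_natr; ring.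
Qed.

End CauchySchwarz.

Section PsdDistance.
Variable R : realType.

Definition sum_mx (m : nat) (M : 'M[R]_m) : R := \sum_i \sum_j M i j.

Lemma sum_mxB m (M N : 'M[R]_m) : sum_mx (M - N) = sum_mx M - sum_mx N.
Proof.
rewrite /sum_mx -sumrB; apply: eq_bigr => i _; rewrite -sumrB.
by apply: eq_bigr => j _; rewrite !mxE.
Qed.

Lemma norm_sum_mx_le_frob m (M : 'M[R]_m) : `|sum_mx M| <= m%:R * frob M.
Proof.
have cs : sum_mx M ^+ 2 <= m%:R ^+ 2 * \sum_i \sum_j M i j ^+ 2.
  rewrite /sum_mx !pair_bigA /=.
  have := sqr_sum_le_card_sum_sqr (fun p : 'I_m * 'I_m => M p.1 p.2).
  by rewrite card_prod card_ord natrM expr2.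
rewrite -(sqrtr_sqr (sum_mx M)) -[m%:R]ger0_norm ?ler0n // -sqrtr_sqr.
by rewrite /frob -sqrtrM ?sqr_ge0 // ler_sqrt // (le_trans (sqr_ge0 _) cs).
Qed.

Lemma quad_formE m (A : 'M[R]_m) (x : 'cV[R]_m) :
  (x^T *m A *m x) 0 0 = \sum_i \sum_j x i 0 * A i j * x j 0.
Proof.
rewrite mxE exchange_big /=; apply: eq_bigr => j _.
by rewrite mxE mulr_suml; apply: eq_bigr => i _; rewrite !mxE.
Qed.

Lemma psd_sum_mx_ge0 m (N : 'M[R]_m) : psd N -> 0 <= sum_mx N.
Proof.
move=> [_ /(_ (const_mx 1))]; rewrite quad_formE.
by under eq_bigr do under eq_bigr do rewrite !mxE mul1r mulr1.
Qed.

Lemma psd0 m : psd (0 : 'M[R]_m).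
Proof.
split; first by rewrite /symmetric_mx trmx0.
by move=> x; rewrite mulmx0 mul0mx mxE.
Qed.

Lemma dist_psd_le_frob m (M : 'M[R]_m) : dist_psd M <= frob M.
Proof.
rewrite -[in leRHS](subr0 M); apply: ge_inf; last by exists 0 => //; apply: psd0.
by exists 0 => _ [N _ <-]; apply: sqrtr_ge0.
Qed.

Lemma sum_mx_le_dist_psd m (M : 'M[R]_m) : (0 < m)%N ->
  - sum_mx M / m%:R <= dist_psd M.
Proof.
move=> m_gt0; apply: lb_le_inf; first by exists (frob (M - 0)), 0 => //; apply: psd0.
move=> _ [N /psd_sum_mx_ge0 sumN_ge0 <-].
rewrite ler_pdivrMr ?ltr0n // mulrC; apply: le_trans (norm_sum_mx_le_frob _).
by rewrite sum_mxB ler_normr; apply/orP; right; lra.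
Qed.

Lemma dist_psd_le_dist_bar m (K : set 'M[R]_m) (M : 'M[R]_m) :
  K M -> frob M = 1 -> dist_psd M <= dist_bar K.
Proof.
move=> KM frobM; apply: ub_le_sup; last by exists M.
by exists 1 => _ [N [_ frobN] <-]; rewrite -frobN dist_psd_le_frob.
Qed.

End PsdDistance.

Section ScalarMinusConstant.
Variables (R : realType) (a b : R).

Lemma principal_submx_scalar_sub_const n (S : {set 'I_n}) :
  principal_submx S (a%:M - const_mx b) = a%:M - const_mx b.
Proof. by apply/matrixP => i j; rewrite !mxE (inj_eq enum_val_inj). Qed.

Lemma quad_form_scalar_sub_const m (x : 'cV[R]_m) :
  (x^T *m (a%:M - const_mx b) *m x) 0 0 =
  a * \sum_i x i 0 ^+ 2 - b * (\sum_i x i 0) ^+ 2.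
Proof.
rewrite quad_formE.
transitivity (\sum_i (\sum_j (a * (x i 0 * x j 0)) *+ (i == j)
                      - \sum_j b * (x i 0 * x j 0))).
  apply: eq_bigr => i _; rewrite -sumrB; apply: eq_bigr => j _.
  by rewrite !mxE; case: (i == j); rewrite /= ?mulr1n ?mulr0n; ring.
under eq_bigr do rewrite sumr_mulrn_eq.
rewrite sumrB expr2 big_distrlr !mulr_sumr /=.
by congr (_ - _); apply: eq_bigr => i _; rewrite ?expr2 ?mulr_sumr.
Qed.

Lemma psd_scalar_sub_const m :
  0 <= b -> m%:R * b <= a -> psd (a%:M - const_mx b : 'M[R]_m).
Proof.
move=> b_ge0 mb_le_a; split; first by apply/matrixP => i j; rewrite !mxE eq_sym.
move=> x; rewrite quad_form_scalar_sub_const.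
have := sqr_sum_le_card_sum_sqr (fun i => x i 0); rewrite card_ord.
have : 0 <= \sum_i x i 0 ^+ 2 by apply: sumr_ge0 => i _; apply: sqr_ge0.
set s := \sum_i _; set t := \sum_i _; nra.
Qed.

Lemma kpsd_closure_scalar_sub_const n k :
  0 <= b -> k%:R * b <= a -> @kpsd_closure R n k (a%:M - const_mx b).
Proof.
move=> b_ge0 kb_le_a; split; first by apply/matrixP => i j; rewrite !mxE eq_sym.
move=> S cardS; rewrite principal_submx_scalar_sub_const.
by apply: psd_scalar_sub_const; rewrite ?cardS.
Qed.

Lemma sum_mx_scalar_sub_const m :
  sum_mx (a%:M - const_mx b : 'M[R]_m) = m%:R * (a - m%:R * b).
Proof.
rewrite /sum_mx; under eq_bigr do under eq_bigr do rewrite !mxE.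
under eq_bigr do rewrite sumrB sumr_mulrn_eq sumr_const card_ord.
by rewrite sumr_const card_ord; ring.
Qed.

Lemma frob_scalar_sub_const m :
  frob (a%:M - const_mx b : 'M[R]_m) =
  Num.sqrt (m%:R * ((a - b) ^+ 2 + (m%:R - 1) * b ^+ 2)).
Proof.
congr Num.sqrt.
transitivity (\sum_(i < m) ((a ^+ 2 - 2%:R * a * b) + m%:R * b ^+ 2)).
  apply: eq_bigr => i _.
  transitivity (\sum_j ((a ^+ 2 - 2%:R * a * b) *+ (i == j) + b ^+ 2)).
    by apply: eq_bigr => j _; rewrite !mxE; case: (i == j); rewrite /= ?mulr1n ?mulr0n; ring.
  by rewrite big_split /= sumr_mulrn_eq sumr_const card_ord; ring.
by rewrite sumr_const card_ord; ring.
Qed.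

End ScalarMinusConstant.

Theorem theorem3 (R : realType) (n k : nat) (hk2 : (2 <= k)%N) (hkn : (k < n)%N) :
  (n - k)%:R / Num.sqrt (((k - 1) ^ 2 * n + n * (n - 1))%:R)
    <= dist_bar (@kpsd_closure R n k).
Proof.
have n_gt1 : (1 < n)%N by apply: leq_trans hk2 (ltnW hkn).
have n_gt0 : (0 < n)%N by apply: ltnW.
set S : R := (_ + _)%:R.
have S_gt0 : 0 < S.
  by rewrite ltr0n addn_gt0 [X in _ || X]muln_gt0 n_gt0 subn_gt0 n_gt1 orbT.
set b := (Num.sqrt S)^-1.
have b_gt0 : 0 < b by rewrite invr_gt0 sqrtr_gt0.
pose A : 'M[R]_n := (k%:R * b)%:M - const_mx b.
have A_kpsd : @kpsd_closure R n k A.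
  exact: kpsd_closure_scalar_sub_const (ltW b_gt0) (lexx _).
have bS : b ^+ 2 * S = 1 by rewrite exprVn sqr_sqrtr ?mulVf ?gt_eqF ?ltW.
have A_unit : frob A = 1.
  rewrite frob_scalar_sub_const -[RHS]sqrtr1 -[in RHS]bS; congr Num.sqrt.
  rewrite /S natrD !natrM !natrB ?(ltnW n_gt1) ?(ltnW hk2) //; ring.
apply: le_trans (dist_psd_le_dist_bar A_kpsd A_unit).
apply: le_trans (sum_mx_le_dist_psd _ n_gt0).
rewrite sum_mx_scalar_sub_const natrB ?(ltnW hkn) //.
by rewrite -mulrN mulrAC divff ?mul1r ?opprB ?mulrBl // pnatr_eq0 -lt0n.
Qed.
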